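(* Let $p_1=2<p_2=3<p_3=5<\cdots$ denote the primes in increasing order, and fix an integer $K\ge 1$. Starting from the set $M=\{4,5,6,\dots\}$ of integers $\ge 4$, remove every integer of the form $2np_k$ or $np_k-1$ with $n\ge 2$ an integer and $1\le k\le K$. Then an integer $m$ with $4\le m<p_{K+1}^2-2$ remains after this removal if and only if $m=2q$ for a Sophie Germain prime $q$, i.e. $m=2q$ where both $q$ and $2q+1$ are prime.
   Context: A prime $q$ is a Sophie Germain prime if $2q+1$ is also prime (then $2q+1$ is called a safe prime). *)

From mathcomp Require Import all_boot.
Set Implicit Arguments. Unset Strict Implicit. Unset Printing Implicit Defensive.

(* p_ k := the k-th prime, 1-indexed: p_ 1 = 2, p_ 2 = 3, p_ 3 = 5, ...
   Characterized as: p is prime and exactly k-1 primes are smaller than p. *)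
Definition is_kth_prime (k p : nat) : Prop :=
  prime p /\ count prime (iota 0 p) = k.-1.

Definition removed (K m : nat) : Prop :=
  exists n k p, [/\ 2 <= n, 1 <= k <= K, is_kth_prime k p &
                    m = 2 * n * p \/ m = n * p - 1].

Definition sophie_germain (q : nat) : Prop := prime q /\ prime (2 * q + 1).

From mathcomp Require Import all_boot.
From mathcomp Require Import zify.

Set Implicit Arguments.
Unset Strict Implicit.
Unset Printing Implicit Defensive.

(* Below p_(K+1)^2 the sieve performs trial division by p_1, ..., p_K: a
   composite n < p_(K+1)^2 has a prime factor p with p^2 <= n, hence p < p_(K+1).
   Removing n p_k - 1 with p_1 = 2 kills every odd m; for m = 2q, removing
   2 n p_k kills composite q, and removing n p_k - 1 kills composite 2q + 1.
   Conversely, a removal of 2q is a factorisation q = n p_k or 2q + 1 = n p_k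
   with n >= 2, so q and 2q + 1 cannot both be prime. *)

Lemma composite_mul_small_prime n : 1 < n -> ~~ prime n ->
  exists p d, [/\ prime p, p * p <= n, 2 <= d & n = d * p].
Proof.
move=> n_gt1 n_composite.
have pdiv_sq_le : pdiv n ^ 2 <= n.
  by rewrite leqNgt; apply: contra n_composite; apply: ltn_pdiv2_prime; lia.
have n_eq : n %/ pdiv n * pdiv n = n by rewrite divnK ?pdiv_dvd.
exists (pdiv n), (n %/ pdiv n); split => //; first exact: pdiv_prime.
case: (n %/ pdiv n) n_eq => [|[|d]] n_eq //; first lia.
by move: n_composite; rewrite -n_eq mul1n pdiv_prime.
Qed.

Lemma prime_mul_cofactor n p : prime p -> prime (n * p) -> n = 1.
Proof.
move=> p_prime /primeP[_ /(_ p)]; rewrite dvdn_mull // => /(_ isT) /orP.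
by have := prime_gt1 p_prime => p_gt1 [] /eqP; nia.
Qed.

Lemma count_prime_iota_ltn p P : prime p -> p < P ->
  count prime (iota 0 p) < count prime (iota 0 P).
Proof.
move=> p_prime p_lt_P.
have [r ->] : exists r, P = p + r.+1 by exists (P - p).-1; lia.
by rewrite iotaD count_cat /= add0n p_prime; lia.
Qed.

Section BelowNextPrime.

Variables (K P : nat).
Hypothesis P_kth : is_kth_prime K.+1 P.

Lemma kth_prime_index_of_lt p : prime p -> p < P ->
  exists k, 1 <= k <= K /\ is_kth_prime k p.
Proof.
move=> p_prime p_lt_P; exists (count prime (iota 0 p)).+1.
split; last by [].
have [_ count_P] := P_kth.
by have := count_prime_iota_ltn p_prime p_lt_P; rewrite count_P /=; lia.
Qed.

Lemma removed_mul_prime n p m : prime p -> p < P -> 2 <= n ->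
  m = 2 * n * p \/ m = n * p - 1 -> removed K m.
Proof.
move=> p_prime p_lt_P n_ge2 m_eq.
have [k [k_range p_kth]] := kth_prime_index_of_lt p_prime p_lt_P.
by exists n, k, p.
Qed.

Lemma removed_composite n m : 1 < n -> ~~ prime n -> n < P ^ 2 ->
  m = 2 * n \/ m = n - 1 -> removed K m.
Proof.
move=> n_gt1 n_composite n_lt m_eq.
have [p [d [p_prime p_sq_le d_ge2 n_eq]]] := composite_mul_small_prime n_gt1 n_composite.
apply: (removed_mul_prime (n := d) p_prime) => //; last by subst n; lia.
by rewrite ltnNge; apply/negP => P_le_p; have := leq_mul P_le_p P_le_p; lia.
Qed.

Lemma removed_odd m : 1 <= K -> 3 <= m -> odd m -> removed K m.
Proof.
move=> K_gt0 m_ge3 m_odd.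
have P_gt2 : 2 < P by case: P_kth; case: (P) => [|[|[|]]] //=; lia.
apply: (removed_mul_prime (n := m.+1./2) (p := 2)) => //; first lia.
by right; rewrite -[m.+1]odd_double_half /= m_odd; lia.
Qed.

End BelowNextPrime.

Lemma double_sophie_germain_not_removed K q :
  sophie_germain q -> ~ removed K (2 * q).
Proof.
move=> [q_prime q2_prime] [n [_ [p [n_ge2 _ [p_prime _] [m_eq | m_eq]]]]].
- have q_eq : q = n * p by lia.
  by move: q_prime; rewrite q_eq => /(prime_mul_cofactor p_prime); lia.
- have q2_eq : 2 * q + 1 = n * p by have := prime_gt1 p_prime; lia.
  by move: q2_prime; rewrite q2_eq => /(prime_mul_cofactor p_prime); lia.
Qed.

Theorem mainTheorem2 (K : nat) (hK : 1 <= K) (P : nat) (hP : is_kth_prime K.+1 P)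
  (m : nat) (hm4 : 4 <= m) (hmP : m < P ^ 2 - 2) :
  ~ removed K m <-> exists q, m = 2 * q /\ sophie_germain q.
Proof.
split; last by move=> [q [-> q_sg]]; exact: double_sophie_germain_not_removed.
move=> not_removed.
have m_even : ~~ odd m.
  by apply/negP => m_odd; apply/not_removed/(removed_odd hP) => //; lia.
have m_eq : m = 2 * m./2 by rewrite -[m in LHS]odd_double_half (negbTE m_even) -mul2n.
exists m./2; split => //; split.
- apply: contra_notT not_removed => half_composite.
  by apply: (removed_composite hP _ half_composite) => //; lia.
- apply: contra_notT not_removed => succ_composite.
  by apply: (removed_composite hP _ succ_composite) => //; lia.
Qed.
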